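(* Let $g \ge 2$ and let $\Gamma_g$ be the fundamental group of a closed orientable surface of genus $g$. Let $G$ be a residually nilpotent group with $G/\gamma_k(G) \cong \Gamma_g/\gamma_k(\Gamma_g)$ for all $k \ge 1$. Then no finite-index subgroup of $G$ is free.
   Context: $\gamma_k$ denotes the lower central series: $\gamma_1(G)=G$, $\gamma_k(G)=[G,\gamma_{k-1}(G)]$. A group is residually nilpotent if the intersection of its lower central series is trivial. Such a $G$ is called a ($g$-)parasurface group. *)

From Stdlib Require Import List Arith.
Import ListNotations.

Record group := Group {
  carrier :> Type;
  gmul : carrier -> carrier -> carrier;
  gone : carrier;
  ginv : carrier -> carrier;
  gmulA : forall x y z, gmul x (gmul y z) = gmul (gmul x y) z;
  gmul1l : forall x, gmul gone x = x;
  gmulVl : forall x, gmul (ginv x) x = gone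
}.

Arguments gmul {g}.
Arguments gone {g}.
Arguments ginv {g}.

Definition comm {G : group} (x y : G) : G :=
  gmul (gmul (ginv x) (ginv y)) (gmul x y).

Inductive gen (G : group) (S : G -> Prop) : G -> Prop :=
| gen_base : forall x, S x -> gen G S x
| gen_one : gen G S gone
| gen_mul : forall x y, gen G S x -> gen G S y -> gen G S (gmul x y)
| gen_inv : forall x, gen G S x -> gen G S (ginv x).

(* lcs G n = gamma_{n+1}(G) *)
Fixpoint lcs (G : group) (n : nat) : G -> Prop :=
  match n with
  | 0 => fun _ => True
  | S m => gen G (fun z => exists x y, lcs G m y /\ z = comm x y)
  end.

Definition gamma (G : group) (k : nat) : G -> Prop := lcs G (k - 1).

Definition residually_nilpotent (G : group) : Prop :=
  forall x : G, (forall k, 1 <= k -> gamma G k x) -> x = gone.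

Definition is_subgroup (G : group) (S : G -> Prop) : Prop :=
  S gone /\ (forall x y, S x -> S y -> S (gmul x y)) /\ (forall x, S x -> S (ginv x)).

Definition finite_index (G : group) (S : G -> Prop) : Prop :=
  is_subgroup G S /\
  exists l : list G, forall x : G, exists t, In t l /\ S (gmul (ginv t) x).

Definition hom_on {G K : group} (S : G -> Prop) (f : G -> K) : Prop :=
  forall x y, S x -> S y -> f (gmul x y) = gmul (f x) (f y).

Definition is_free_subgroup (G : group) (S : G -> Prop) : Prop :=
  exists B : G -> Prop,
    (forall b, B b -> S b) /\
    forall (K : group) (f : G -> K),
      exists phi : G -> K,
        hom_on S phi /\ (forall b, B b -> phi b = f b) /\
        (forall psi : G -> K, hom_on S psi -> (forall b, B b -> psi b = f b) ->
            forall x, S x -> psi x = phi x).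

(* G/N ≅ H/M (N, M normal), expressed via a lift phi : G -> H of the isomorphism:
   phi induces a homomorphism G -> H/M which is surjective with kernel N. *)
Definition quot_iso (G H : group) (N : G -> Prop) (M : H -> Prop) : Prop :=
  exists phi : G -> H,
    (forall x y, M (gmul (ginv (gmul (phi x) (phi y))) (phi (gmul x y)))) /\
    (forall x, N x <-> M (phi x)) /\
    (forall y : H, exists x, M (gmul (ginv (phi x)) y)).

Fixpoint prod_comm {G : group} (a b : nat -> G) (n : nat) : G :=
  match n with
  | 0 => gone
  | S m => gmul (prod_comm a b m) (comm (a m) (b m))
  end.

(* Gam with elements a_i, b_i (i < g) is presented by
   < a_1,b_1,...,a_g,b_g | prod [a_i,b_i] > : universal property of the presentation. *)
Definition is_surface_group (g : nat) (Gam : group) (a b : nat -> Gam) : Prop :=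
  prod_comm a b g = gone /\
  forall (K : group) (a' b' : nat -> K), prod_comm a' b' g = gone ->
    exists phi : Gam -> K,
      hom_on (fun _ => True) phi /\
      (forall i, i < g -> phi (a i) = a' i /\ phi (b i) = b' i) /\
      (forall psi : Gam -> K, hom_on (fun _ => True) psi ->
         (forall i, i < g -> psi (a i) = a' i /\ psi (b i) = b' i) ->
         forall x, psi x = phi x).

(* Suppose a finite-index subgroup S of G is free.  Two characters u, v : G -> Z pulled back
   from the characters of Gamma_g dual to the a_i and b_i (through the isomorphism
   G/gamma_3 G = Gamma_g/gamma_3 Gamma_g) restrict to S, where by freeness (u, v) lifts to a
   homomorphism into the integral Heisenberg group H, i.e. to a function h with
   h(xy) = h x + h y + u x * v y on S.  Transferring h from S to G gives a homomorphism
   F : G -> H with F x = (n * u x, v x, _) for n = [G : S].  The product r of the commutators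
   of lifts of the a_i, b_i lies in gamma_3 G, so F r = 1 as H has class 2; but F r is the
   central element g * n <> 0. *)

From Stdlib Require Import Arith ZArith Lia List Permutation Classical ClassicalEpsilon.
Import ListNotations.

Arguments gmulA {g} x y z.
Arguments gmul1l {g} x.
Arguments gmulVl {g} x.

Lemma mulKl {G : group} (x y : G) : gmul (ginv x) (gmul x y) = y.
Proof. rewrite gmulA, gmulVl, gmul1l. reflexivity. Qed.

Lemma mulVr {G : group} (x : G) : gmul x (ginv x) = gone.
Proof.
  transitivity (gmul (gmul (ginv (ginv x)) (ginv x)) (gmul x (ginv x))).
  - rewrite gmulVl, gmul1l. reflexivity.
  - rewrite <- gmulA, (mulKl x), gmulVl. reflexivity.
Qed.

Lemma mul1r {G : group} (x : G) : gmul x gone = x.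
Proof. rewrite <- (gmulVl x), gmulA, mulVr, gmul1l. reflexivity. Qed.

Lemma mulKr {G : group} (x y : G) : gmul x (gmul (ginv x) y) = y.
Proof. rewrite gmulA, mulVr, gmul1l. reflexivity. Qed.

Lemma mulVKr {G : group} (x y : G) : gmul (gmul x (ginv y)) y = x.
Proof. rewrite <- gmulA, gmulVl, mul1r. reflexivity. Qed.

Lemma mulKVr {G : group} (x y : G) : gmul (gmul x y) (ginv y) = x.
Proof. rewrite <- gmulA, mulVr, mul1r. reflexivity. Qed.

Lemma inv_uniq {G : group} (x y : G) : gmul x y = gone -> y = ginv x.
Proof. intro H. rewrite <- (mulKl x y), H, mul1r. reflexivity. Qed.

Lemma invK {G : group} (x : G) : ginv (ginv x) = x.
Proof. symmetry. apply inv_uniq, gmulVl. Qed.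

Lemma invM {G : group} (x y : G) : ginv (gmul x y) = gmul (ginv y) (ginv x).
Proof. symmetry. apply inv_uniq. rewrite gmulA, mulKVr, mulVr. reflexivity. Qed.

Ltac gsimp := repeat progress
  rewrite ?invM, ?invK, ?gmul1l, ?mul1r, ?gmulA, ?gmulVl, ?mulVr, ?mulVKr, ?mulKVr.

Ltac gsimp_in H := repeat progress
  rewrite ?invM, ?invK, ?gmul1l, ?mul1r, ?gmulA, ?gmulVl, ?mulVr, ?mulVKr, ?mulKVr in H.

Definition hom {G K : group} (f : G -> K) : Prop := hom_on (fun _ => True) f.

Lemma hom1 {G K : group} (f : G -> K) : hom f -> f gone = gone.
Proof.
  intro Hf. pose proof (Hf gone gone I I) as E. rewrite gmul1l in E.
  apply (f_equal (gmul (ginv (f gone)))) in E.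
  rewrite mulKl, gmulVl in E. symmetry. exact E.
Qed.

Lemma homV {G K : group} (f : G -> K) (x : G) : hom f -> f (ginv x) = ginv (f x).
Proof. intro Hf. apply inv_uniq. rewrite <- Hf by exact I. rewrite mulVr. apply hom1, Hf. Qed.

Lemma hom_comm {G K : group} (f : G -> K) (x y : G) : hom f -> f (comm x y) = comm (f x) (f y).
Proof. intro Hf. unfold comm. rewrite !Hf, !(homV f) by easy. reflexivity. Qed.

Lemma hom_prod_comm {G K : group} (f : G -> K) (x y : nat -> G) (n : nat) :
  hom f -> f (prod_comm x y n) = prod_comm (fun i => f (x i)) (fun i => f (y i)) n.
Proof.
  intro Hf. induction n as [|n IH]; simpl.
  - apply hom1, Hf.
  - rewrite Hf, IH, hom_comm by easy. reflexivity.
Qed.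

Definition conjg {G : group} (z x : G) : G := gmul (gmul (ginv z) x) z.

Definition normal {G : group} (M : G -> Prop) : Prop := forall z m, M m -> M (conjg z m).

Lemma conjgM {G : group} (z x y : G) : conjg z (gmul x y) = gmul (conjg z x) (conjg z y).
Proof. unfold conjg. gsimp. reflexivity. Qed.

Lemma conjgV {G : group} (z x : G) : conjg z (ginv x) = ginv (conjg z x).
Proof. unfold conjg. gsimp. reflexivity. Qed.

Lemma conjg1 {G : group} (z : G) : conjg z gone = gone.
Proof. unfold conjg. gsimp. reflexivity. Qed.

Lemma conjg_comm {G : group} (z x y : G) : conjg z (comm x y) = comm (conjg z x) (conjg z y).
Proof. unfold comm. rewrite !conjgM, !conjgV. reflexivity. Qed.

Lemma gen_normal {G : group} (X : G -> Prop) :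
  (forall z x, X x -> gen G X (conjg z x)) -> normal (gen G X).
Proof.
  intros HX z x Hx. induction Hx.
  - apply HX. assumption.
  - rewrite conjg1. apply gen_one.
  - rewrite conjgM. apply gen_mul; assumption.
  - rewrite conjgV. apply gen_inv. assumption.
Qed.

Lemma lcs_normal (G : group) (m : nat) : normal (lcs G m).
Proof.
  induction m as [|m IH]; [intros z m _; exact I|].
  apply gen_normal. intros z _ [x [y [Hy ->]]].
  apply gen_base. exists (conjg z x), (conjg z y). split.
  - apply IH, Hy.
  - apply conjg_comm.
Qed.

Lemma lcs_subgroup (G : group) (m : nat) : is_subgroup G (lcs G m).
Proof.
  destruct m; simpl.
  - repeat split.
  - repeat split; [apply gen_one | apply gen_mul | apply gen_inv].
Qed.

Definition eqmod {G : group} (M : G -> Prop) (x y : G) : Prop := M (gmul (ginv x) y).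

Section Congruence.

Variables (G : group) (M : G -> Prop).
Hypotheses (HM : is_subgroup G M) (HMn : normal M).

Lemma eqmod_refl x : eqmod M x x.
Proof. unfold eqmod. rewrite gmulVl. apply HM. Qed.

Lemma eqmod_sym x y : eqmod M x y -> eqmod M y x.
Proof. unfold eqmod. intro H. apply HM in H. gsimp_in H. exact H. Qed.

Lemma eqmod_trans x y z : eqmod M x y -> eqmod M y z -> eqmod M x z.
Proof.
  unfold eqmod. intros Hxy Hyz. pose proof (proj1 (proj2 HM) _ _ Hxy Hyz) as H.
  rewrite gmulA, mulKVr in H. exact H.
Qed.

Lemma eqmod_mul x x' y y' : eqmod M x x' -> eqmod M y y' -> eqmod M (gmul x y) (gmul x' y').
Proof.
  unfold eqmod. intros Hx Hy.
  pose proof (proj1 (proj2 HM) _ _ (HMn y _ Hx) Hy) as H.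
  unfold conjg in H. gsimp_in H. gsimp. exact H.
Qed.

Lemma eqmod_inv x x' : eqmod M x x' -> eqmod M (ginv x) (ginv x').
Proof.
  unfold eqmod. intro Hx. pose proof (HMn (ginv x) _ (proj2 (proj2 HM) _ Hx)) as H.
  unfold conjg in H. gsimp_in H. gsimp. exact H.
Qed.

Lemma eqmod_prod_comm (x y x' y' : nat -> G) (n : nat) :
  (forall i, eqmod M (x i) (x' i)) -> (forall i, eqmod M (y i) (y' i)) ->
  eqmod M (prod_comm x y n) (prod_comm x' y' n).
Proof.
  intros Hx Hy. induction n as [|n IH]; simpl.
  - apply eqmod_refl.
  - unfold comm. repeat apply eqmod_mul; try apply eqmod_inv; auto.
Qed.

End Congruence.

Lemma hom_eqmod {G K : group} (M : G -> Prop) (f : G -> K) (x y : G) :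
  hom f -> (forall m, M m -> f m = gone) -> eqmod M x y -> f x = f y.
Proof.
  intros Hf HfM Hxy. rewrite <- (mulKr x y), (Hf _ _ I I), (HfM _ Hxy), mul1r. reflexivity.
Qed.

Section QuotientLift.

Variables (G K : group) (N : G -> Prop) (M : K -> Prop) (phi : G -> K).
Hypotheses (HM : is_subgroup K M) (HMn : normal M).
Hypothesis phi_mul : forall x y, M (gmul (ginv (gmul (phi x) (phi y))) (phi (gmul x y))).
Hypothesis phi_ker : forall x, N x <-> M (phi x).
Hypothesis phi_surj : forall y, exists x, M (gmul (ginv (phi x)) y).

Lemma phiM_eqmod x y : eqmod M (phi (gmul x y)) (gmul (phi x) (phi y)).
Proof. apply eqmod_sym; [exact HM | apply phi_mul]. Qed.

Lemma phi1_eqmod : eqmod M (phi gone) gone.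
Proof.
  pose proof (eqmod_mul K M HM HMn _ _ _ _
    (eqmod_refl K M HM (ginv (phi gone))) (phiM_eqmod gone gone)) as H.
  rewrite gmul1l, mulKl, gmulVl in H. apply eqmod_sym; assumption.
Qed.

Lemma phiV_eqmod x : eqmod M (phi (ginv x)) (ginv (phi x)).
Proof.
  assert (H : eqmod M (gmul (phi (ginv x)) (phi x)) gone).
  { apply (eqmod_trans K M HM _ (phi (gmul (ginv x) x))).
    - apply eqmod_sym, phiM_eqmod. exact HM.
    - rewrite gmulVl. apply phi1_eqmod. }
  pose proof (eqmod_mul K M HM HMn _ _ _ _ H (eqmod_refl K M HM (ginv (phi x)))) as H'.
  rewrite mulKVr, gmul1l in H'. exact H'.
Qed.

Lemma phi_comm_eqmod x y : eqmod M (phi (comm x y)) (comm (phi x) (phi y)).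
Proof.
  unfold comm.
  eapply eqmod_trans; [exact HM | apply phiM_eqmod |].
  apply eqmod_mul; [exact HM | exact HMn | |];
    (eapply eqmod_trans; [exact HM | apply phiM_eqmod |]);
    apply eqmod_mul; try exact HM; try exact HMn; try apply phiV_eqmod; apply eqmod_refl, HM.
Qed.

Lemma phi_prod_comm_eqmod (x y : nat -> G) (n : nat) :
  eqmod M (phi (prod_comm x y n)) (prod_comm (fun i => phi (x i)) (fun i => phi (y i)) n).
Proof.
  induction n as [|n IH]; simpl; [apply phi1_eqmod|].
  eapply eqmod_trans; [exact HM | apply phiM_eqmod |].
  apply eqmod_mul; [exact HM | exact HMn | exact IH | apply phi_comm_eqmod].
Qed.

Lemma hom_quot_comp (L : group) (f : K -> L) :
  hom f -> (forall m, M m -> f m = gone) -> hom (fun x => f (phi x)).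
Proof.
  intros Hf HfM x y _ _. rewrite (hom_eqmod M f _ _ Hf HfM (phiM_eqmod x y)).
  apply Hf; exact I.
Qed.

Lemma lift_relator (a b : nat -> K) (n : nat) :
  prod_comm a b n = gone ->
  exists x y : nat -> G,
    (forall i, eqmod M (phi (x i)) (a i) /\ eqmod M (phi (y i)) (b i)) /\
    N (prod_comm x y n).
Proof.
  intro Hrel.
  destruct (choice _ (fun i => phi_surj (a i))) as [x Hx].
  destruct (choice _ (fun i => phi_surj (b i))) as [y Hy].
  exists x, y. split; [intro i; split; [apply Hx | apply Hy]|].
  apply phi_ker.
  assert (H : eqmod M (phi (prod_comm x y n)) gone).
  { eapply eqmod_trans; [exact HM | apply phi_prod_comm_eqmod |].
    rewrite <- Hrel. apply eqmod_prod_comm; assumption. }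
  unfold eqmod in H. rewrite mul1r in H. apply HM in H. rewrite invK in H. exact H.
Qed.

End QuotientLift.

Open Scope Z_scope.

Definition Zg : group.
Proof. refine (Group Z Z.add 0 Z.opp _ _ _); intros; lia. Defined.

Lemma Zhom_lcsS {G : group} (f : G -> Zg) (m : nat) (x : G) :
  hom f -> lcs G (S m) x -> f x = 0.
Proof.
  intros Hf Hx. induction Hx as [z [x [y [_ ->]]] | | x y _ IHx _ IHy | x _ IHx].
  - rewrite hom_comm by exact Hf. simpl. lia.
  - exact (hom1 f Hf).
  - rewrite Hf, IHx, IHy by exact I. reflexivity.
  - rewrite homV, IHx by exact Hf. reflexivity.
Qed.

Lemma prod_comm_Zg (a b : nat -> Zg) (n : nat) : prod_comm a b n = 0.
Proof. induction n as [|n IH]; simpl; [reflexivity|]. rewrite IH. lia. Qed.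

Lemma surface_characters (g : nat) (Gam : group) (a b : nat -> Gam) :
  is_surface_group g Gam a b ->
  exists U V : Gam -> Zg, hom U /\ hom V /\
    forall i, (i < g)%nat -> U (a i) = 1 /\ V (a i) = 0 /\ U (b i) = 0 /\ V (b i) = 1.
Proof.
  intros [_ Huniv].
  destruct (Huniv Zg (fun _ => 1) (fun _ => 0) (prod_comm_Zg _ _ _)) as [U [HU [HUab _]]].
  destruct (Huniv Zg (fun _ => 0) (fun _ => 1) (prod_comm_Zg _ _ _)) as [V [HV [HVab _]]].
  exists U, V. split; [exact HU | split; [exact HV |]].
  intros i Hi. destruct (HUab i Hi), (HVab i Hi). auto.
Qed.

(* The integral Heisenberg group: (p, q, s) is the unitriangular matrix [[1,p,s],[0,1,q],[0,0,1]]. *)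
Definition H3mul (x y : Z * Z * Z) : Z * Z * Z :=
  match x, y with (p, q, s), (p', q', s') => (p + p', q + q', s + s' + p * q') end.

Definition H3inv (x : Z * Z * Z) : Z * Z * Z :=
  match x with (p, q, s) => (- p, - q, - s + p * q) end.

Definition H3 : group.
Proof.
  refine (Group (Z * Z * Z) H3mul (0, 0, 0) H3inv _ _ _).
  - intros [[p q] s] [[p' q'] s'] [[p'' q''] s'']; simpl. rewrite ?pair_equal_spec; repeat split; ring.
  - intros [[p q] s]; simpl. rewrite ?pair_equal_spec; repeat split; ring.
  - intros [[p q] s]; simpl. rewrite ?pair_equal_spec; repeat split; ring.
Defined.

Lemma H3_comm (p q s p' q' s' : Z) :
  @comm H3 (p, q, s) (p', q', s') = (0, 0, p * q' - p' * q).
Proof. simpl. rewrite ?pair_equal_spec; repeat split; ring. Qed.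

Lemma hom_H3_lcs1 {G : group} (F : G -> H3) (x : G) :
  hom F -> lcs G 1 x -> exists s, F x = (0, 0, s).
Proof.
  intros HF Hx. induction Hx as [z [x [y [_ ->]]] | | x y _ [s1 E1] _ [s2 E2] | x _ [s E]].
  - rewrite hom_comm by exact HF.
    destruct (F x) as [[p q] s], (F y) as [[p' q'] s']. rewrite H3_comm. eauto.
  - exists 0. exact (hom1 F HF).
  - rewrite HF, E1, E2 by exact I. eexists. reflexivity.
  - rewrite homV, E by exact HF. eexists. reflexivity.
Qed.

Lemma hom_H3_lcs2 {G : group} (F : G -> H3) (x : G) : hom F -> lcs G 2 x -> F x = (0, 0, 0).
Proof.
  intros HF Hx. induction Hx as [z [x [y [Hy ->]]] | | x y _ IHx _ IHy | x _ IHx].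
  - rewrite hom_comm by exact HF. destruct (hom_H3_lcs1 F y HF Hy) as [s' ->].
    destruct (F x) as [[p q] s]. rewrite H3_comm; simpl; rewrite ?pair_equal_spec; repeat split; ring.
  - exact (hom1 F HF).
  - rewrite HF, IHx, IHy by exact I. reflexivity.
  - rewrite homV, IHx by exact HF. reflexivity.
Qed.

Lemma H3_prod_comm_symplectic (x y : nat -> H3) (c : Z) (m : nat) :
  (forall i, (i < m)%nat ->
     fst (fst (x i)) = c /\ snd (fst (x i)) = 0 /\ fst (fst (y i)) = 0 /\ snd (fst (y i)) = 1) ->
  prod_comm x y m = (0, 0, Z.of_nat m * c).
Proof.
  induction m as [|m IH]; intro Hxy; [reflexivity|]. simpl prod_comm.
  rewrite IH by (intros i Hi; apply Hxy; lia).
  destruct (Hxy m (Nat.lt_succ_diag_r m)) as [Hp [Hq [Hp' Hq']]].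
  destruct (x m) as [[p q] s], (y m) as [[p' q'] s']. simpl in Hp, Hq, Hp', Hq'. subst.
  rewrite Nat2Z.inj_succ. simpl. rewrite ?pair_equal_spec; repeat split; ring.
Qed.

Definition heis_cocycle {G : group} (S : G -> Prop) (u v h : G -> Z) : Prop :=
  forall x y, S x -> S y -> h (gmul x y) = h x + h y + u x * v y.

Lemma free_subgroup_basis {G : group} (S : G -> Prop) :
  is_free_subgroup G S ->
  exists B : G -> Prop,
    (forall (K : group) (f : G -> K), exists phi : G -> K,
        hom_on S phi /\ forall b, B b -> phi b = f b) /\
    (forall (K : group) (psi1 psi2 : G -> K), hom_on S psi1 -> hom_on S psi2 ->
        (forall b, B b -> psi1 b = psi2 b) -> forall x, S x -> psi1 x = psi2 x).
Proof.
  intros [B [_ Hfree]]. exists B. split.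
  - intros K f. destruct (Hfree K f) as [phi [Hphi [HphiB _]]]. eauto.
  - intros K psi1 psi2 H1 H2 H12 x Hx.
    destruct (Hfree K psi2) as [phi [_ [_ Huniq]]].
    rewrite (Huniq psi1), (Huniq psi2); auto.
Qed.

(* Freeness lifts the homomorphism (u, v) : S -> Z^2 along the abelianization H3 -> Z^2. *)
Lemma free_heis_cocycle {G : group} (S : G -> Prop) (u v : G -> Z) :
  is_free_subgroup G S -> hom (u : G -> Zg) -> hom (v : G -> Zg) -> exists h, heis_cocycle S u v h.
Proof.
  intros Hfree Hu Hv. destruct (free_subgroup_basis S Hfree) as [B [Hext Huniq]].
  destruct (Hext H3 (fun x => (u x, v x, 0))) as [F [HF HFB]].
  assert (Hp : forall x, S x -> fst (fst (F x)) = u x).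
  { apply (Huniq Zg (fun x => fst (fst (F x))) u).
    - intros x y Hx Hy. rewrite HF by assumption.
      destruct (F x) as [[? ?] ?], (F y) as [[? ?] ?]. reflexivity.
    - intros x y _ _. apply Hu; exact I.
    - intros b Hb. rewrite HFB by exact Hb. reflexivity. }
  assert (Hq : forall x, S x -> snd (fst (F x)) = v x).
  { apply (Huniq Zg (fun x => snd (fst (F x))) v).
    - intros x y Hx Hy. rewrite HF by assumption.
      destruct (F x) as [[? ?] ?], (F y) as [[? ?] ?]. reflexivity.
    - intros x y _ _. apply Hv; exact I.
    - intros b Hb. rewrite HFB by exact Hb. reflexivity. }
  exists (fun x => snd (F x)). intros x y Hx Hy.
  rewrite HF, <- (Hp x Hx), <- (Hq y Hy) by assumption.
  destruct (F x) as [[? ?] ?], (F y) as [[? ?] ?]. reflexivity.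
Qed.

Lemma transversal_exists {G : group} (S : G -> Prop) (l : list G) :
  is_subgroup G S ->
  exists T, NoDup T /\
    (forall t1 t2, In t1 T -> In t2 T -> eqmod S t1 t2 -> t1 = t2) /\
    (forall x, (exists t, In t l /\ eqmod S t x) -> exists t, In t T /\ eqmod S t x).
Proof.
  intro HS. induction l as [|a l [T [HTnd [HTdist HTcov]]]].
  - exists []. split; [constructor | split]; [intros t1 t2 [] | intros x [t [[] _]]].
  - destruct (classic (exists t, In t T /\ eqmod S t a)) as [[t' [Ht' Ha]] | Hnew].
    + exists T. split; [exact HTnd | split; [exact HTdist |]].
      intros x [t [[<- | Ht] Hx]].
      * exists t'. split; [exact Ht' | eapply eqmod_trans; eassumption].
      * apply HTcov. eauto.
    + exists (a :: T). split; [| split].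
      * constructor; [| exact HTnd].
        intro Ha. apply Hnew. exists a. split; [exact Ha | apply eqmod_refl, HS].
      * intros t1 t2 [<- | H1] [<- | H2] H12; auto; exfalso; apply Hnew.
        -- exists t2. split; [exact H2 | apply eqmod_sym; assumption].
        -- exists t1. split; assumption.
      * intros x [t [[<- | Ht] Hx]].
        -- exists a. split; [left |]; auto.
        -- destruct (HTcov x) as [t' [Ht' Hx']]; [eauto |]. exists t'. split; [right |]; auto.
Qed.

Fixpoint sumZ (l : list Z) : Z := match l with [] => 0 | z :: l' => z + sumZ l' end.

Lemma sumZ_map_add {A : Type} (f1 f2 : A -> Z) (l : list A) :
  sumZ (map (fun t => f1 t + f2 t) l) = sumZ (map f1 l) + sumZ (map f2 l).
Proof. induction l as [|t l IH]; simpl; [reflexivity|]. rewrite IH. ring. Qed.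

Lemma sumZ_map_const {A : Type} (c : Z) (l : list A) :
  sumZ (map (fun _ => c) l) = Z.of_nat (length l) * c.
Proof. induction l as [|t l IH]; [reflexivity|]. cbn [map sumZ length]. rewrite IH, Nat2Z.inj_succ. ring. Qed.

Lemma sumZ_perm (l l' : list Z) : Permutation l l' -> sumZ l = sumZ l'.
Proof. induction 1; simpl; lia. Qed.

Section Transfer.

Variables (G : group) (S : G -> Prop) (T : list G).
Hypotheses (HS : is_subgroup G S) (HTnd : NoDup T)
  (HTdist : forall t1 t2, In t1 T -> In t2 T -> eqmod S t1 t2 -> t1 = t2)
  (HTcov : forall x, exists t, In t T /\ eqmod S t x).
Variables (u v h : G -> Z).
Hypotheses (Hu : hom (u : G -> Zg)) (Hv : hom (v : G -> Zg)) (Hh : heis_cocycle S u v h).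

Definition rep (x : G) : G := proj1_sig (constructive_indefinite_description _ (HTcov x)).

Lemma rep_spec x : In (rep x) T /\ eqmod S (rep x) x.
Proof. exact (proj2_sig (constructive_indefinite_description _ (HTcov x))). Qed.

Lemma rep_unique t x : In t T -> eqmod S t x -> t = rep x.
Proof.
  intros Ht Htx. destruct (rep_spec x) as [Hr Hrx]. apply HTdist; [exact Ht | exact Hr |].
  eapply eqmod_trans; [exact HS | exact Htx | apply eqmod_sym; assumption].
Qed.

Lemma rep_mulr x s : S s -> rep (gmul x s) = rep x.
Proof.
  intro Hs. symmetry. apply rep_unique; [apply rep_spec |].
  unfold eqmod. rewrite gmulA. apply HS; [apply rep_spec | exact Hs].
Qed.

Lemma rep_mull_perm y : Permutation (map (fun t => rep (gmul y t)) T) T.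
Proof.
  apply NoDup_Permutation_bis.
  - apply NoDup_map_NoDup_ForallPairs; [| exact HTnd].
    intros t1 t2 H1 H2 E. apply HTdist; [exact H1 | exact H2 |].
    assert (H : eqmod S (gmul y t1) (gmul y t2)).
    { eapply eqmod_trans; [exact HS | apply eqmod_sym; [exact HS | apply rep_spec] |].
      rewrite E. apply rep_spec. }
    unfold eqmod in *. rewrite invM, <- gmulA, mulKl in H. exact H.
  - rewrite length_map. reflexivity.
  - intros z Hz. apply in_map_iff in Hz. destruct Hz as [t [<- _]]. apply rep_spec.
Qed.

Definition heis_ext (x : G) : Z :=
  h (gmul (ginv (rep x)) x) + u (rep x) * v (gmul (ginv (rep x)) x).

Lemma heis_ext_mulr x s : S s -> heis_ext (gmul x s) = heis_ext x + h s + u x * v s.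
Proof.
  intro Hs. unfold heis_ext. rewrite rep_mulr, gmulA, Hh by (apply rep_spec || exact Hs).
  rewrite !Hv, !Hu by exact I.
  rewrite (homV (u : G -> Zg)), (homV (v : G -> Zg)) by assumption. simpl. ring.
Qed.

(* [transfer_cocycle x] only depends on the coset [g S] and left translation permutes the
   cosets, so summing it over a transversal gives a cocycle on all of [G]. *)
Definition transfer_cocycle (x g : G) : Z := heis_ext (gmul x g) - heis_ext g - u x * v g.

Lemma transfer_cocycle_mulr x g s : S s -> transfer_cocycle x (gmul g s) = transfer_cocycle x g.
Proof.
  intro Hs. unfold transfer_cocycle.
  rewrite gmulA, (heis_ext_mulr (gmul x g) s), (heis_ext_mulr g s), !Hv, Hu by (exact Hs || exact I).
  simpl. ring.
Qed.

Lemma transfer_cocycle_rep x g : transfer_cocycle x g = transfer_cocycle x (rep g).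
Proof.
  rewrite <- (mulKr (rep g) g) at 1. apply transfer_cocycle_mulr, rep_spec.
Qed.

Lemma transfer_cocycle_mul x y g :
  transfer_cocycle (gmul x y) g = transfer_cocycle x (gmul y g) + transfer_cocycle y g + u x * v y.
Proof.
  unfold transfer_cocycle. rewrite <- gmulA, !Hu, !Hv by exact I. simpl. ring.
Qed.

Definition transfer (x : G) : Z := sumZ (map (transfer_cocycle x) T).

Lemma transfer_mul x y :
  transfer (gmul x y) = transfer x + transfer y + Z.of_nat (length T) * (u x * v y).
Proof.
  unfold transfer.
  rewrite (map_ext _ _ (transfer_cocycle_mul x y)), !sumZ_map_add, sumZ_map_const.
  rewrite (map_ext _ (fun t => transfer_cocycle x (rep (gmul y t))))
    by (intro t; apply transfer_cocycle_rep).
  rewrite <- (map_map (fun t => rep (gmul y t)) (transfer_cocycle x)).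
  rewrite (sumZ_perm _ _ (Permutation_map _ (rep_mull_perm y))). reflexivity.
Qed.

End Transfer.

Lemma transfer_heis_hom {G : group} (S : G -> Prop) (u v h : G -> Z) :
  finite_index G S -> hom (u : G -> Zg) -> hom (v : G -> Zg) -> heis_cocycle S u v h ->
  exists (n : Z) (D : G -> Z), 1 <= n /\ hom (fun x => (n * u x, v x, D x) : H3).
Proof.
  intros [HS [l Hl]] Hu Hv Hh.
  destruct (transversal_exists S l HS) as [T [HTnd [HTdist HTcov]]].
  assert (HTcov' : forall x, exists t, In t T /\ eqmod S t x) by (intro x; apply HTcov, Hl).
  exists (Z.of_nat (length T)), (transfer G S T HTcov' u v h). split.
  - destruct T; [destruct (HTcov' gone) as [? [[] _]] | simpl length; lia].
  - intros x y _ _. rewrite transfer_mul by assumption. simpl.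
    rewrite Hu, Hv by exact I. simpl. rewrite ?pair_equal_spec; repeat split; ring.
Qed.

Close Scope Z_scope.

Theorem theorem8 :
  forall (g : nat), 2 <= g ->
  forall (Gam : group) (a b : nat -> Gam), is_surface_group g Gam a b ->
  forall (G : group), residually_nilpotent G ->
  (forall k, 1 <= k -> quot_iso G Gam (gamma G k) (gamma Gam k)) ->
  forall S : G -> Prop, finite_index G S -> ~ is_free_subgroup G S.
Proof.
  intros g Hg Gam a b Hsurf G _ Hiso S HSfin HSfree.
  destruct (Hiso 3 ltac:(lia)) as [phi [Hmul [Hker Hsurj]]].
  pose proof (lcs_subgroup Gam 2) as HM. pose proof (lcs_normal Gam 2) as HMn.
  destruct (surface_characters g Gam a b Hsurf) as [U [V [HU [HV Hab]]]].
  assert (HUM : forall m, lcs Gam 2 m -> U m = 0%Z) by (intro m; apply (Zhom_lcsS U 1 m HU)).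
  assert (HVM : forall m, lcs Gam 2 m -> V m = 0%Z) by (intro m; apply (Zhom_lcsS V 1 m HV)).
  set (u := fun x => U (phi x) : Z). set (v := fun x => V (phi x) : Z).
  pose proof (hom_quot_comp G Gam _ phi HM Hmul Zg U HU HUM) as Hu.
  pose proof (hom_quot_comp G Gam _ phi HM Hmul Zg V HV HVM) as Hv.
  destruct (lift_relator G Gam _ _ phi HM HMn Hmul Hker Hsurj a b g (proj1 Hsurf))
    as [x [y [Hxy Hr]]].
  destruct (free_heis_cocycle S u v HSfree Hu Hv) as [h Hh].
  destruct (transfer_heis_hom S u v h HSfin Hu Hv Hh) as [n [D [Hn HF]]].
  assert (Hchar : forall i, i < g ->
            u (x i) = 1%Z /\ v (x i) = 0%Z /\ u (y i) = 0%Z /\ v (y i) = 1%Z).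
  { intros i Hi. destruct (Hxy i) as [Hx Hy]. unfold u, v.
    rewrite (hom_eqmod _ U _ _ HU HUM Hx), (hom_eqmod _ U _ _ HU HUM Hy),
            (hom_eqmod _ V _ _ HV HVM Hx), (hom_eqmod _ V _ _ HV HVM Hy).
    apply Hab, Hi. }
  set (F := fun z => (n * u z, v z, D z)%Z : H3) in HF.
  pose proof (hom_H3_lcs2 F _ HF Hr) as HFr.
  rewrite (hom_prod_comm F x y g HF), (H3_prod_comm_symplectic _ _ n) in HFr.
  - injection HFr. lia.
  - intros i Hi. simpl. destruct (Hchar i Hi) as [-> [-> [-> ->]]]. repeat split; ring.
Qed.
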